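(* Let $k\ge 3$ and $N\ge 1$ be integers, and let $A\subseteq\{1,\dots,N\}$ be a non-empty set containing no $k$AP. Let $E_N\subset[0,1]$ be the self-similar attractor of the iterated function system $\{f_j: j\in A\}$, where $f_j(x)=\frac{x}{12N}+\frac{6j}{12N}$, i.e. $E_N=\bigcap_{\ell\ge 1}\bigcup_{i_1,\dots,i_\ell\in A} f_{i_1}\circ\cdots\circ f_{i_\ell}([0,1])$. Then $\dim_H(E_N)=\frac{\log\#A}{\log(12N)}$, and $E_N$ $\varepsilon_N$-avoids $k$APs, where $\varepsilon_N=\frac{1}{12N}$.
   Context: A $k$-term arithmetic progression ($k$AP) is a set $P=\{x, x+\lambda, \dots, x+(k-1)\lambda\}\subset\mathbb{R}$ with $\lambda>0$, called the gap length of $P$. A set $E\subset\mathbb{R}$ $\varepsilon$-avoids $k$APs if for every $k$AP $P$ with gap length $\lambda$ one has $\sup_{p\in P}\inf_{x\in E}|x-p|\ge\varepsilon\lambda$. *)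

From Stdlib Require Import Reals Lra List.
Import ListNotations.
Open Scope R_scope.

Definition diam_le (U : R -> Prop) (d : R) : Prop :=
  forall x y, U x -> U y -> Rabs (x - y) <= d.

(* d^s with the convention 0^s = 0 (used only for s > 0). *)
Definition pw (d s : R) : R := if Rlt_dec 0 d then Rpower d s else 0.

(* H^s_delta(E) = 0 : for every eta > 0 there is a countable delta-cover
   (U_n) of E, with diam U_n <= d_n <= delta, whose sum of d_n^s is <= eta.
   (Using upper bounds d_n for the diameters gives the same infimum.) *)
Definition hausdorff_content_zero (s delta : R) (E : R -> Prop) : Prop :=
  forall eta, 0 < eta ->
    exists (U : nat -> R -> Prop) (d : nat -> R),
      (forall x, E x -> exists n, U n x) /\
      (forall n, 0 <= d n <= delta /\ diam_le (U n) (d n)) /\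
      (forall m, sum_f_R0 (fun n => pw (d n) s) m <= eta).

(* H^s(E) = lim_{delta -> 0} H^s_delta(E) = 0; since H^s_delta increases as
   delta decreases, this holds iff H^s_delta(E) = 0 for every delta > 0. *)
Definition hausdorff_measure_zero (s : R) (E : R -> Prop) : Prop :=
  forall delta, 0 < delta -> hausdorff_content_zero s delta E.

Definition is_glb (S : R -> Prop) (m : R) : Prop :=
  (forall x, S x -> m <= x) /\ (forall b, (forall x, S x -> b <= x) -> b <= m).

Definition hausdorff_dim_eq (E : R -> Prop) (v : R) : Prop :=
  is_glb (fun s => 0 < s /\ hausdorff_measure_zero s E) v.

Definition contains_nat_kAP (k : nat) (A : list nat) : Prop :=
  exists x lam : nat, (0 < lam)%nat /\
    forall i : nat, (i < k)%nat -> In (x + i * lam)%nat A.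

(* E epsilon-avoids kAPs: for every kAP P = {x + i lam : i < k}, lam > 0,
   sup_{p in P} inf_{e in E} |e - p| >= eps * lam.  Since P is finite, the
   sup is a max, and inf_{e in E} |e - p| >= c means every e in E has
   |e - p| >= c. *)
Definition eps_avoids_kAP (k : nat) (eps : R) (E : R -> Prop) : Prop :=
  forall x lam : R, 0 < lam ->
    exists i : nat, (i < k)%nat /\
      forall e, E e -> Rabs (e - (x + INR i * lam)) >= eps * lam.

Definition fmap (N j : nat) (x : R) : R :=
  x / (12 * INR N) + 6 * INR j / (12 * INR N).

Definition fcomp (N : nat) (w : list nat) (y : R) : R :=
  fold_right (fun j z => fmap N j z) y w.

Definition attractor (N : nat) (A : list nat) (x : R) : Prop :=
  forall l : nat, (1 <= l)%nat ->
    exists w : list nat, length w = l /\ Forall (fun j => In j A) w /\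
      exists y, 0 <= y <= 1 /\ x = fcomp N w y.

From Stdlib Require Import Reals Lra Lia List Classical ClassicalEpsilon.
Import ListNotations.
Open Scope R_scope.

(* Write [r = 1/(12N)]. The first-level pieces [f_j([0,1]) = [6jr, 6jr + r]] are
   separated by gaps of length [5r].

   Avoidance: if every point [x + i lam] of a kAP is within [r lam] of [E_N], then
   [lam <= 1/2] because [E_N] lies in [[6r, 1/2 + r]]. Two consecutive points then
   lie either near the same piece, which forces [lam < 2r], or near pieces [j < j']
   with [6r (j' - j)] close to [lam]; in the second case all index jumps are equal
   and the pieces visited form a kAP in [A]. In the first case all [k] points are
   near one piece, and undoing [f_j] gives the same situation with gap [lam / r].
   Iterating, the gap eventually exceeds [1/2].

   Dimension: with [n = #A] and [D = log n / log (12N)] one has [n r^D = 1]. For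
   [s > D] the [n^l] level-[l] intervals cover [E_N] with total weight
   [(n r^s)^l -> 0]. For [s < D], a cover of small [s]-weight is enlarged to open
   intervals, finitely many of which cover a level set by compactness; an interval
   of length at most [5 r^q] contains at most [n^(m-q)] of the [n^m] level-[m] left
   endpoints, so [1 <= sum n^(-q_i)], which is bounded by a multiple of the weight. *)

Lemma exp_le x y : x <= y -> exp x <= exp y.
Proof. intros [H|H]; [left; apply exp_increasing, H|subst; lra]. Qed.

Lemma INR_close_eq u v : Rabs (INR u - INR v) < 1 -> u = v.
Proof.
  intros H; destruct (Nat.lt_trichotomy u v) as [Hl|[He|Hl]]; auto;
    apply le_INR in Hl; rewrite S_INR in Hl; revert H; unfold Rabs; destruct Rcase_abs; lra.
Qed.

Lemma Rpower_pow_l x s l : 0 < x -> Rpower (x ^ l) s = Rpower x s ^ l.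
Proof.
  intros Hx; rewrite <- (Rpower_pow l x Hx), <- Rpower_pow by apply exp_pos.
  rewrite !Rpower_mult; f_equal; ring.
Qed.

Lemma Rpower_le_exponent_anti x s t : 0 < x <= 1 -> s <= t -> Rpower x t <= Rpower x s.
Proof.
  intros [Hx0 [Hx1|Hx1]] Hst; [|subst x]; unfold Rpower; apply exp_le; [|rewrite ln_1; lra].
  assert (ln x < 0) by (rewrite <- ln_1; apply ln_increasing; lra); nra.
Qed.

Lemma pow_le_one x k : 0 <= x <= 1 -> x ^ k <= 1.
Proof.
  intros Hx; induction k as [|k IH]; simpl; [lra|].
  assert (0 <= x ^ k) by (apply pow_le; lra); nra.
Qed.

Lemma geom_half_sum K : sum_f_R0 (fun i => (1 / 2) ^ S i) K <= 1.
Proof.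
  assert (Hsum : forall K', sum_f_R0 (fun i => (1 / 2) ^ S i) K' = 1 - (1 / 2) ^ S K').
  { induction K' as [|K' IH]; [simpl; lra|rewrite tech5, IH; simpl; lra]. }
  rewrite Hsum; assert (0 < (1 / 2) ^ S K) by (apply pow_lt; lra); lra.
Qed.

Lemma scale_exists r l : 0 < r < 1 -> 0 < l <= 5 -> exists q, 5 * r ^ S q < l <= 5 * r ^ q.
Proof.
  intros Hr Hl.
  destruct (pow_lt_1_zero r ltac:(rewrite Rabs_right; lra) (l / 5) ltac:(lra)) as [Q HQ].
  specialize (HQ Q (le_n _)); rewrite Rabs_right in HQ by (apply Rle_ge, pow_le; lra).
  assert (HQ' : 5 * r ^ Q < l) by lra; clear HQ; induction Q as [|Q IH]; [simpl in HQ'; lra|].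
  destruct (Rle_lt_dec l (5 * r ^ Q)); [exists Q; split; auto|apply IH; auto].
Qed.

Lemma small_radius s e : 0 < s -> 0 < e -> exists rho, 0 < rho <= 1 / 8 /\ Rpower rho s <= e.
Proof.
  intros Hs He; exists (Rmin (1 / 8) (Rpower e (/ s))).
  assert (0 < Rpower e (/ s)) by apply exp_pos.
  split; [split; [apply Rmin_pos; lra|apply Rmin_l]|].
  apply Rle_trans with (Rpower (Rpower e (/ s)) s).
  - apply Rle_Rpower_l; [lra|split; [apply Rmin_pos; lra|apply Rmin_r]].
  - rewrite Rpower_mult, Rinv_l, Rpower_1 by lra; lra.
Qed.

Lemma pw_nonneg d s : 0 <= pw d s.
Proof. unfold pw; destruct Rlt_dec; [left; apply exp_pos|lra]. Qed.

Lemma Rpower_interval_le d rho s : 0 <= d -> 0 < rho -> 0 < s <= 1 ->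
  Rpower (2 * (d + rho)) s <= 4 * (pw d s + Rpower rho s).
Proof.
  intros Hd Hrho Hs.
  assert (Hm : 0 < Rmax d rho) by (unfold Rmax; destruct Rle_dec; lra).
  apply Rle_trans with (Rpower (4 * Rmax d rho) s).
  { apply Rle_Rpower_l; [lra|]; unfold Rmax; destruct Rle_dec; lra. }
  rewrite <- Rpower_mult_distr by lra.
  assert (Rpower 4 s <= 4) by (rewrite <- (Rpower_1 4) at 2 by lra; apply Rle_Rpower; lra).
  assert (Rpower (Rmax d rho) s <= pw d s + Rpower rho s).
  { assert (0 < Rpower d s) by apply exp_pos; assert (0 < Rpower rho s) by apply exp_pos.
    unfold Rmax, pw; destruct Rle_dec; destruct Rlt_dec; lra. }
  assert (0 < Rpower (Rmax d rho) s) by apply exp_pos; nra.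
Qed.

Lemma list_sum_map_flat_map {T U : Type} (f : U -> nat) (g : T -> list U) L :
  list_sum (map f (flat_map g L)) = list_sum (map (fun x => list_sum (map f (g x))) L).
Proof. induction L as [|x L IH]; simpl; auto; rewrite map_app, list_sum_app, IH; auto. Qed.

Lemma list_sum_map_le_length {T : Type} (f : T -> nat) L :
  (forall x, In x L -> (f x <= 1)%nat) -> (list_sum (map f L) <= length L)%nat.
Proof.
  induction L as [|x L IH]; simpl; intros H; auto.
  specialize (IH (fun y Hy => H y (or_intror Hy))); specialize (H x (or_introl eq_refl)); lia.
Qed.

Lemma list_sum_map_pos {T : Type} (f : T -> nat) L :
  (0 < list_sum (map f L))%nat -> exists x, In x L /\ (0 < f x)%nat.
Proof.
  induction L as [|x L IH]; simpl; intros H; [lia|].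
  destruct (Nat.eq_dec (f x) 0) as [Hx|Hx]; [|exists x; split; auto; lia].
  destruct IH as [y [Hy Hfy]]; [lia|exists y; auto].
Qed.

Lemma list_sum_map_single {T : Type} (f : T -> nat) L K : NoDup L ->
  (forall x y, In x L -> In y L -> (0 < f x)%nat -> (0 < f y)%nat -> x = y) ->
  (forall x, In x L -> (f x <= K)%nat) -> (list_sum (map f L) <= K)%nat.
Proof.
  induction L as [|x L IH]; simpl; intros Hnd Hu Hb; [lia|].
  inversion Hnd as [|? ? Hx HndL]; subst.
  destruct (Nat.eq_dec (f x) 0) as [Hfx|Hfx]; [rewrite Hfx; apply IH; auto|].
  destruct (Nat.eq_dec (list_sum (map f L)) 0) as [HL|HL].
  - specialize (Hb x (or_introl eq_refl)); lia.
  - destruct (list_sum_map_pos f L ltac:(lia)) as [y [Hy Hfy]].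
    exfalso; apply Hx; replace x with y by (apply Hu; auto; lia); exact Hy.
Qed.

Lemma sum_f_R0_ge_term (u : nat -> R) K i : (forall j, 0 <= u j) -> (i <= K)%nat ->
  u i <= sum_f_R0 u K.
Proof.
  intros Hu Hi; induction K as [|K IH]; simpl.
  - replace i with 0%nat by lia; lra.
  - destruct (Nat.eq_dec i (S K)) as [->|Hne].
    + pose proof (cond_pos_sum u K Hu); lra.
    + specialize (Hu (S K)); pose proof (IH ltac:(lia)); lra.
Qed.

Lemma length_le_sum_counts {T : Type} (c : nat -> T -> nat) (L : list T) K :
  (forall x, In x L -> exists i, (i <= K)%nat /\ (1 <= c i x)%nat) ->
  INR (length L) <= sum_f_R0 (fun i => INR (list_sum (map (c i) L))) K.
Proof.
  induction L as [|x L IH]; intros Hcov; simpl length.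
  - apply cond_pos_sum; intros; apply pos_INR.
  - rewrite S_INR, (sum_eq _ (fun i => INR (c i x) + INR (list_sum (map (c i) L))))
      by (intros; simpl; apply plus_INR).
    rewrite plus_sum.
    destruct (Hcov x (or_introl eq_refl)) as [i [Hi Hci]].
    pose proof (sum_f_R0_ge_term (fun i => INR (c i x)) K i (fun j => pos_INR _) Hi).
    apply le_INR in Hci; simpl in *.
    pose proof (IH (fun y Hy => Hcov y (or_intror Hy))); lra.
Qed.

Lemma nat_fun_bound (g : nat -> nat) K : exists m, forall i, (i <= K)%nat -> (g i <= m)%nat.
Proof.
  induction K as [|K [m Hm]]; [exists (g 0%nat); intros i Hi; replace i with 0%nat by lia; lia|].
  exists (Nat.max m (g (S K))); intros i Hi.
  destruct (Nat.eq_dec i (S K)) as [->|Hne]; [lia|specialize (Hm i ltac:(lia)); lia].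
Qed.

Definition open_indicator (a b x : R) : nat :=
  if Rlt_dec a x then if Rlt_dec x b then 1%nat else 0%nat else 0%nat.

Lemma open_indicator_le_one a b x : (open_indicator a b x <= 1)%nat.
Proof. unfold open_indicator; repeat destruct Rlt_dec; lia. Qed.

Lemma open_indicator_pos a b x : (0 < open_indicator a b x)%nat -> a < x < b.
Proof. unfold open_indicator; repeat destruct Rlt_dec; intros; try lia; auto. Qed.

Lemma open_indicator_in a b x : a < x < b -> open_indicator a b x = 1%nat.
Proof. unfold open_indicator; intros []; repeat destruct Rlt_dec; try lra; auto. Qed.

(** * Covers and Hausdorff dimension on the line *)

Lemma INR_list_bound (l : list R) : exists K : nat, forall y, In y l -> y <= INR K.
Proof.
  induction l as [|a l [K HK]]; [exists 0%nat; intros y []|].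
  destruct (INR_unbounded a) as [K' HK']; exists (Nat.max K K'); intros y [<-|Hy].
  - assert (INR K' <= INR (Nat.max K K')) by (apply le_INR; lia); lra.
  - assert (INR K <= INR (Nat.max K K')) by (apply le_INR; lia); specialize (HK y Hy); lra.
Qed.

(* Heine-Borel for an increasing sequence of open sets. *)
Lemma unit_interval_increasing_cover (W : nat -> R -> Prop) :
  (forall M K z, (M <= K)%nat -> W M z -> W K z) ->
  (forall M z, W M z -> exists d, 0 < d /\ forall y, Rabs (y - z) < d -> W M y) ->
  (forall z, 0 <= z <= 1 -> exists M, W M z) ->
  exists K, forall z, 0 <= z <= 1 -> W K z.
Proof.
  intros Hmono Hopen Hcov.
  assert (Hdom : forall x, (exists y, exists M : nat, x = INR M /\ W M y) ->
                   exists M : nat, x = INR M) by (intros x [y [M [HM _]]]; exists M; auto).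
  set (fam := mkfamily (fun x => exists M : nat, x = INR M)
                (fun x z => exists M : nat, x = INR M /\ W M z) Hdom).
  destruct (compact_P3 0 1 fam) as [D [Hcov' [l Hl]]].
  - split.
    + intros z Hz; destruct (Hcov z Hz) as [M HM]; exists (INR M); simpl; exists M; auto.
    + intros x z [M [-> HM]]; destruct (Hopen M z HM) as [d [Hd Hy]].
      exists (mkposreal d Hd); intros y Hy'; simpl; exists M; split; auto.
  - destruct (INR_list_bound l) as [K HK]; exists K; intros z Hz.
    destruct (Hcov' z Hz) as [y [[M [-> HM]] HD]].
    assert (Hin : In (INR M) l) by (apply Hl; split; auto; exists M; auto).
    apply HK, INR_le in Hin; eapply Hmono; eauto.
Qed.

Lemma outside_intervals_open {T : Type} (L : list T) (g : T -> R) h z :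
  (forall w, In w L -> ~ (g w <= z <= g w + h)) ->
  exists d, 0 < d /\ forall y, Rabs (y - z) < d -> forall w, In w L -> ~ (g w <= y <= g w + h).
Proof.
  induction L as [|w0 L IH]; intros H; [exists 1; split; [lra|intros y _ w []]|].
  destruct IH as [d [Hd Hy]]; [intros w Hw; apply H; simpl; auto|].
  assert (H0 := H w0 (or_introl eq_refl)).
  assert (Hd0 : exists d0, 0 < d0 /\ forall y, Rabs (y - z) < d0 -> ~ (g w0 <= y <= g w0 + h)).
  { destruct (Rlt_le_dec z (g w0)).
    - exists (g w0 - z); split; [lra|intros y Hy' [Ha1 Ha2]].
      revert Hy'; unfold Rabs; destruct Rcase_abs; intros; lra.
    - assert (g w0 + h < z) by (apply Rnot_le_lt; intros Hc; apply H0; split; auto).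
      exists (z - (g w0 + h)); split; [lra|intros y Hy' [Ha1 Ha2]].
      revert Hy'; unfold Rabs; destruct Rcase_abs; intros; lra. }
  destruct Hd0 as [d0 [Hd0 Hy0]]; exists (Rmin d d0); split; [apply Rmin_pos; auto|].
  intros y Hyz w [<-|Hw].
  - apply Hy0; eapply Rlt_le_trans; [exact Hyz|apply Rmin_r].
  - apply Hy; auto; eapply Rlt_le_trans; [exact Hyz|apply Rmin_l].
Qed.

Lemma diam_le_open_interval U d rho : diam_le U d -> 0 < rho ->
  exists a, forall x, U x -> a < x < a + 2 * (d + rho).
Proof.
  intros HU Hrho; destruct (classic (exists x0, U x0)) as [[x0 Hx0]|Hempty].
  - exists (x0 - d - rho); intros x Hx; specialize (HU x x0 Hx Hx0).
    revert HU; unfold Rabs; destruct Rcase_abs; intros; lra.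
  - exists 0; intros x Hx; exfalso; apply Hempty; exists x; exact Hx.
Qed.

Lemma sum_f_R0_indicator_le (len : nat) (c : R) m : 0 <= c ->
  sum_f_R0 (fun i => if (i <? len)%nat then c else 0) m <= INR len * c.
Proof.
  intros Hc.
  assert (Hsum : forall m', sum_f_R0 (fun i => if (i <? len)%nat then c else 0) m'
     = INR (Nat.min (S m') len) * c).
  { induction m' as [|m' IH]; simpl sum_f_R0.
    - destruct len as [|len]; simpl; ring.
    - rewrite IH; destruct (Nat.ltb_spec (S m') len).
      + rewrite !Nat.min_l by lia; rewrite (S_INR (S m')); ring.
      + rewrite !Nat.min_r by lia; ring. }
  rewrite Hsum; apply Rmult_le_compat_r; auto; apply le_INR; lia.
Qed.

(* A finite cover, padded with empty sets, is a countable one. *)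
Lemma content_zero_of_finite_covers s delta E :
  (forall eta, 0 < eta -> exists (L : list (R -> Prop)) d,
     0 <= d <= delta /\ (forall U, In U L -> diam_le U d) /\
     (forall x, E x -> exists U, In U L /\ U x) /\ INR (length L) * pw d s <= eta) ->
  hausdorff_content_zero s delta E.
Proof.
  intros H eta Heta; destruct (H eta Heta) as [L [d [Hd [Hdiam [Hcov Hsum]]]]].
  exists (fun n => nth n L (fun _ => False)), (fun n => if (n <? length L)%nat then d else 0).
  split; [|split].
  - intros x Hx; destruct (Hcov x Hx) as [U [HU HUx]].
    destruct (In_nth L U (fun _ => False) HU) as [n [_ HnU]]; exists n; rewrite HnU; exact HUx.
  - intros n; destruct (Nat.ltb_spec n (length L)) as [Hn|Hn].
    + split; [lra|]; apply Hdiam, nth_In, Hn.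
    + split; [lra|]; rewrite nth_overflow by lia; intros x y [].
  - intros m; eapply Rle_trans; [|exact Hsum].
    eapply Rle_trans; [|apply sum_f_R0_indicator_le, pw_nonneg].
    right; apply sum_eq; intros i _; destruct (i <? length L)%nat; auto.
    unfold pw; destruct Rlt_dec; [lra|reflexivity].
Qed.

Lemma hausdorff_dim_eq_of_bounds (E : R -> Prop) D : 0 <= D ->
  (forall s, 0 < s < D -> ~ hausdorff_measure_zero s E) ->
  (forall s, D < s -> hausdorff_measure_zero s E) ->
  hausdorff_dim_eq E D.
Proof.
  intros HD Hlow Hup; split.
  - intros s [Hs Hnull]; apply Rnot_lt_le; intros Hlt; apply (Hlow s); auto.
  - intros b Hb; apply Rnot_lt_le; intros Hlt.
    assert (Hs : D < (b + D) / 2) by lra.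
    assert (Hpos : 0 < (b + D) / 2) by lra.
    specialize (Hb _ (conj Hpos (Hup _ Hs))); lra.
Qed.

(** * The self-similar set *)

Fixpoint words {T : Type} (A : list T) (l : nat) : list (list T) :=
  match l with
  | O => [[]]
  | S l => flat_map (fun j => map (cons j) (words A l)) A
  end.

Lemma in_words {T : Type} (A : list T) l w :
  In w (words A l) <-> length w = l /\ Forall (fun j => In j A) w.
Proof.
  revert w; induction l as [|l IH]; intros w; simpl.
  - split; [intros [<-|[]]; auto|].
    intros [Hl _]; destruct w; [auto|discriminate].
  - rewrite in_flat_map; split.
    + intros [j [Hj Hw]]; apply in_map_iff in Hw as [w' [<- Hw']].
      apply IH in Hw' as [Hl Hw']; simpl; auto.
    + intros [Hl Hw]; destruct w as [|j w]; [discriminate|].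
      inversion Hw; subst; exists j; split; auto.
      apply in_map, IH; auto.
Qed.

Lemma length_words {T : Type} (A : list T) l : length (words A l) = (length A ^ l)%nat.
Proof.
  induction l as [|l IH]; simpl; auto.
  rewrite length_flat_map, (map_ext _ (fun _ => length (words A l)))
    by (intros; apply length_map).
  rewrite IH; simpl; generalize (length A ^ l)%nat; clear IH; intros c.
  induction A as [|a A IHA]; simpl; lia.
Qed.

Definition ratio (N : nat) : R := 1 / (12 * INR N).

Section SelfSimilarSet.

Variables (N : nat) (A : list nat).
Hypothesis N_pos : (1 <= N)%nat.
Hypothesis A_range : forall j, In j A -> (1 <= j <= N)%nat.

Local Notation r := (ratio N).
Local Notation word w := (Forall (fun j => In j A) w).

Definition level_set (l : nat) (x : R) : Prop :=
  exists w, length w = l /\ word w /\ exists y, 0 <= y <= 1 /\ x = fcomp N w y.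

Lemma ratio_pos : 0 < r.
Proof. apply le_INR in N_pos; simpl in N_pos; unfold ratio; apply Rdiv_lt_0_compat; lra. Qed.

Lemma ratio_le : r <= 1 / 12.
Proof.
  apply le_INR in N_pos; simpl in N_pos; unfold ratio.
  apply Rmult_le_reg_r with (12 * INR N); [lra|]; field_simplify; lra.
Qed.

Lemma INR_N_ratio : 12 * INR N * r = 1.
Proof. apply le_INR in N_pos; simpl in N_pos; unfold ratio; field; lra. Qed.

Lemma fmap_affine j x : fmap N j x = r * x + 6 * INR j * r.
Proof. unfold fmap, ratio, Rdiv; ring. Qed.

Lemma fcomp_affine w y : fcomp N w y = fcomp N w 0 + r ^ length w * y.
Proof. induction w as [|j w IH]; simpl; [ring|]; rewrite !fmap_affine, IH; ring. Qed.

Lemma fcomp_app u v y : fcomp N (u ++ v) y = fcomp N u (fcomp N v y).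
Proof. apply fold_right_app. Qed.

Lemma fmap_piece j y : 0 <= y <= 1 ->
  6 * INR j * r <= fmap N j y <= 6 * INR j * r + r.
Proof.
  intros [Hy0 Hy1]; rewrite fmap_affine; pose proof ratio_pos.
  assert (0 <= r * y <= r) by (split; nra); lra.
Qed.

Lemma piece_in_unit j : (j <= N)%nat -> 6 * INR j * r + r <= 1.
Proof.
  intros Hj; apply le_INR in Hj; pose proof (le_INR _ _ N_pos); simpl in *.
  pose proof ratio_pos; pose proof INR_N_ratio.
  assert (0 <= (INR N - INR j) * r) by (apply Rmult_le_pos; lra).
  assert (0 <= (6 * INR N - 1) * r) by (apply Rmult_le_pos; lra); lra.
Qed.

Lemma fcomp_in_unit w y : word w -> 0 <= y <= 1 -> 0 <= fcomp N w y <= 1.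
Proof.
  intros Hw Hy; induction Hw as [|j w Hj _ IH]; simpl; auto.
  apply A_range in Hj; pose proof (fmap_piece j _ IH).
  pose proof (piece_in_unit j ltac:(lia)); pose proof ratio_pos; pose proof (pos_INR j); nra.
Qed.

Lemma piece_unique j j' x :
  6 * INR j * r <= x <= 6 * INR j * r + r ->
  6 * INR j' * r <= x <= 6 * INR j' * r + r -> j = j'.
Proof.
  intros H1 H2; pose proof ratio_pos.
  destruct (Nat.lt_trichotomy j j') as [Hl|[He|Hl]]; auto;
    apply le_INR in Hl; rewrite S_INR in Hl; nra.
Qed.

Lemma fmap_inj j y y' : fmap N j y = fmap N j y' -> y = y'.
Proof.
  rewrite !fmap_affine; intros H; pose proof ratio_pos.
  apply Rmult_eq_reg_l with r; lra.
Qed.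

Lemma level_set_unit l x : level_set l x -> 0 <= x <= 1.
Proof. intros [w [_ [Hw [y [Hy ->]]]]]; apply fcomp_in_unit; auto. Qed.

Lemma level_set_fcomp w y l : word w -> (l <= length w)%nat -> 0 <= y <= 1 ->
  level_set l (fcomp N w y).
Proof.
  intros Hw Hl Hy; rewrite <- (firstn_skipn l w) in Hw |- *.
  apply Forall_app in Hw as [H1 H2].
  exists (firstn l w); split; [rewrite length_firstn; lia|split; auto].
  exists (fcomp N (skipn l w) y); split; [apply fcomp_in_unit; auto|apply fcomp_app].
Qed.

Lemma level_set_anti l m x : (l <= m)%nat -> level_set m x -> level_set l x.
Proof. intros Hlm [w [Hl [Hw [y [Hy ->]]]]]; apply level_set_fcomp; auto; lia. Qed.

Lemma level_set_iff l z : level_set l z <->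
  exists w, In w (words A l) /\ fcomp N w 0 <= z <= fcomp N w 0 + r ^ l.
Proof.
  pose proof ratio_pos; assert (0 < r ^ l) by (apply pow_lt; lra); split.
  - intros [w [Hl [Hw [y [Hy ->]]]]]; exists w; split; [apply in_words; auto|].
    rewrite (fcomp_affine w y), Hl; split; nra.
  - intros [w [Hw Hz]]; apply in_words in Hw as [Hl Hw].
    exists w; split; auto; split; auto.
    exists ((z - fcomp N w 0) / r ^ l); rewrite (fcomp_affine w (_ / _)), Hl; split.
    + split; [apply Rmult_le_pos; [lra|left; apply Rinv_0_lt_compat; lra]|].
      apply Rmult_le_reg_l with (r ^ l); auto.
      replace (r ^ l * ((z - fcomp N w 0) / r ^ l)) with (z - fcomp N w 0) by (field; lra).
      rewrite Rmult_1_r; lra.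
    + field; lra.
Qed.

Lemma attractor_unit x : attractor N A x -> 0 <= x <= 1.
Proof. intros Hx; apply (level_set_unit 1), Hx; lia. Qed.

Lemma attractor_fmap x : attractor N A x ->
  exists j y, In j A /\ attractor N A y /\ x = fmap N j y.
Proof.
  intros Hx; destruct (Hx 1%nat (le_n _)) as [w [Hl [Hw [y [Hy ->]]]]].
  destruct w as [|j [|]]; try discriminate; inversion Hw as [|? ? Hj]; subst.
  exists j, y; split; auto; split; auto.
  intros l Hl1; destruct (Hx (S l) ltac:(lia)) as [w' [Hlw [Hw' [y' [Hy' Hx']]]]].
  destruct w' as [|j' w']; [discriminate|]; inversion Hw' as [|? ? Hj' Hw'']; subst.
  simpl in Hx'; pose proof (fcomp_in_unit w' y' Hw'' Hy').
  assert (j' = j) as -> by (apply (piece_unique _ _ (fmap N j y));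
    [rewrite Hx'|]; apply fmap_piece; auto).
  exists w'; simpl in Hlw; split; [lia|split; auto].
  exists y'; split; auto; apply (fmap_inj j); exact Hx'.
Qed.

Lemma attractor_bounds x : attractor N A x -> 6 * r <= x <= 1 / 2 + r.
Proof.
  intros Hx; destruct (attractor_fmap x Hx) as [j [y [Hj [Hy ->]]]].
  pose proof (fmap_piece j y (attractor_unit y Hy)); apply A_range in Hj as [Hj1 HjN].
  apply le_INR in Hj1, HjN; simpl in Hj1; pose proof ratio_pos; pose proof INR_N_ratio; nra.
Qed.

(** * Progressions near the attractor *)

Lemma consecutive_pieces a a' y y' p lam : 0 <= y <= 1 -> 0 <= y' <= 1 ->
  Rabs (fmap N a y - p) < r * lam -> Rabs (fmap N a' y' - (p + lam)) < r * lam ->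
  Rabs (6 * r * (INR a' - INR a) - lam) < 2 * r * lam + r.
Proof.
  intros Hy Hy' H1 H2; pose proof (fmap_piece a y Hy); pose proof (fmap_piece a' y' Hy').
  revert H1 H2; unfold Rabs; repeat destruct Rcase_abs; intros; lra.
Qed.

Lemma consecutive_pieces_cases a a' lam : 0 < lam <= 1 / 2 ->
  Rabs (6 * r * (INR a' - INR a) - lam) < 2 * r * lam + r ->
  (a' = a /\ lam < 2 * r) \/ (4 * r < lam /\ (a < a')%nat).
Proof.
  intros Hl H; pose proof ratio_pos; pose proof ratio_le.
  destruct (Nat.lt_trichotomy a a') as [Hlt|[->|Hlt]].
  - right; split; auto; apply le_INR in Hlt; rewrite S_INR in Hlt.
    revert H; unfold Rabs; destruct Rcase_abs; intros; nra.
  - left; split; auto; revert H; unfold Rabs; destruct Rcase_abs; intros; nra.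
  - exfalso; apply le_INR in Hlt; rewrite S_INR in Hlt.
    revert H; unfold Rabs; destruct Rcase_abs; intros; nra.
Qed.

Lemma kAP_point_S x lam i : x + INR (S i) * lam = x + INR i * lam + lam.
Proof. rewrite S_INR; ring. Qed.

Section Avoidance.

Variable k : nat.
Hypothesis k_ge2 : (2 <= k)%nat.
Hypothesis A_no_kAP : ~ contains_nat_kAP k A.

(* The progression [x + i lam], [i < k], violates [eps_avoids_kAP k r]. *)
Definition near_attractor_kAP (x lam : R) : Prop :=
  forall i, (i < k)%nat ->
    exists e, attractor N A e /\ Rabs (e - (x + INR i * lam)) < r * lam.

Lemma near_attractor_piece x lam i : near_attractor_kAP x lam -> (i < k)%nat ->
  exists a y, In a A /\ attractor N A y /\ Rabs (fmap N a y - (x + INR i * lam)) < r * lam.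
Proof.
  intros H Hi; destruct (H i Hi) as [e [He Hd]].
  destruct (attractor_fmap e He) as [a [y [Ha [Hy ->]]]]; exists a, y; auto.
Qed.

Lemma near_attractor_gap_le x lam : 0 < lam -> near_attractor_kAP x lam -> lam <= 1 / 2.
Proof.
  intros Hl H; destruct (H 0%nat ltac:(lia)) as [e0 [He0 H0]].
  destruct (H 1%nat ltac:(lia)) as [e1 [He1 H1]]; simpl in H0, H1.
  pose proof (attractor_bounds e0 He0); pose proof (attractor_bounds e1 He1).
  pose proof ratio_pos; pose proof ratio_le.
  revert H0 H1; unfold Rabs; repeat destruct Rcase_abs; intros; nra.
Qed.

Lemma near_attractor_one_piece x lam a y0 : 0 < lam < 2 * r -> near_attractor_kAP x lam ->
  attractor N A y0 -> Rabs (fmap N a y0 - (x + INR 0 * lam)) < r * lam ->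
  near_attractor_kAP ((x - 6 * INR a * r) / r) (lam / r).
Proof.
  intros Hl H Hy0 H0; pose proof ratio_pos; pose proof ratio_le.
  assert (Hall : forall i, (i < k)%nat ->
    exists y, attractor N A y /\ Rabs (fmap N a y - (x + INR i * lam)) < r * lam).
  { induction i as [|i IH]; intros Hi; [exists y0; auto|].
    destruct (IH ltac:(lia)) as [yi [Hyi Hi']].
    destruct (near_attractor_piece x lam (S i) H Hi) as [a' [y' [_ [Hy' H']]]].
    rewrite kAP_point_S in H'.
    pose proof (consecutive_pieces a a' yi y' _ lam (attractor_unit yi Hyi)
      (attractor_unit y' Hy') Hi' H') as P.
    destruct (consecutive_pieces_cases a a' lam ltac:(lra) P) as [[-> _]|[? _]]; [|lra].
    exists y'; split; auto.
    rewrite kAP_point_S; exact H'. }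
  intros i Hi; destruct (Hall i Hi) as [y [Hy Hd]]; exists y; split; auto.
  rewrite fmap_affine in Hd.
  replace (r * y + 6 * INR a * r - (x + INR i * lam)) with
    (r * (y - ((x - 6 * INR a * r) / r + INR i * (lam / r)))) in Hd by (field; lra).
  rewrite Rabs_mult, (Rabs_right r) in Hd by lra.
  replace (r * (lam / r)) with lam by (field; lra).
  apply Rmult_lt_reg_l with r; lra.
Qed.

Lemma near_attractor_progression x lam a0 a1 y0 y1 : 0 < lam <= 1 / 2 ->
  near_attractor_kAP x lam -> In a0 A -> attractor N A y0 -> attractor N A y1 ->
  Rabs (fmap N a0 y0 - (x + INR 0 * lam)) < r * lam ->
  Rabs (fmap N a1 y1 - (x + INR 1 * lam)) < r * lam -> (a0 < a1)%nat ->
  contains_nat_kAP k A.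
Proof.
  intros Hl H Ha0 Hy0 Hy1 H0 H1 Hlt; pose proof ratio_pos; pose proof ratio_le.
  rewrite (kAP_point_S x lam 0) in H1.
  pose proof (consecutive_pieces a0 a1 y0 y1 _ lam (attractor_unit y0 Hy0)
    (attractor_unit y1 Hy1) H0 H1) as P01.
  exists a0, (a1 - a0)%nat; split; [lia|].
  assert (Hall : forall i, (i < k)%nat -> In (a0 + i * (a1 - a0))%nat A /\
    exists y, attractor N A y /\
      Rabs (fmap N (a0 + i * (a1 - a0))%nat y - (x + INR i * lam)) < r * lam).
  { induction i as [|i IH]; intros Hi.
    - rewrite Nat.mul_0_l, Nat.add_0_r; split; [|exists y0]; auto.
    - destruct (IH ltac:(lia)) as [_ [yi [Hyi Hi']]].
      destruct (near_attractor_piece x lam (S i) H Hi) as [a' [y' [Ha' [Hy' H']]]].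
      rewrite kAP_point_S in H'.
      pose proof (consecutive_pieces _ a' yi y' _ lam (attractor_unit yi Hyi)
        (attractor_unit y' Hy') Hi' H') as P.
      (* two consecutive jumps differ by less than one piece, hence are equal *)
      assert (Heq : a' = (a0 + S i * (a1 - a0))%nat).
      { apply INR_close_eq; rewrite plus_INR, mult_INR, minus_INR in * by lia.
        rewrite S_INR; revert P P01; unfold Rabs; repeat destruct Rcase_abs; intros; nra. }
      rewrite <- Heq; split; auto; exists y'; split; auto.
      rewrite kAP_point_S; exact H'. }
  intros i Hi; apply Hall, Hi.
Qed.

Lemma near_attractor_zoom x lam : 0 < lam <= 1 / 2 -> near_attractor_kAP x lam ->
  exists x', near_attractor_kAP x' (lam / r).
Proof.
  intros Hl H.
  destruct (near_attractor_piece x lam 0 H ltac:(lia)) as [a0 [y0 [Ha0 [Hy0 H0]]]].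
  destruct (near_attractor_piece x lam 1 H ltac:(lia)) as [a1 [y1 [Ha1 [Hy1 H1]]]].
  assert (P01 := consecutive_pieces a0 a1 y0 y1 _ lam (attractor_unit y0 Hy0)
    (attractor_unit y1 Hy1) H0 ltac:(rewrite <- kAP_point_S; exact H1)).
  destruct (consecutive_pieces_cases a0 a1 lam Hl P01) as [[_ Hsmall]|[_ Hlt]].
  - exists ((x - 6 * INR a0 * r) / r); apply (near_attractor_one_piece x lam a0 y0); auto.
    pose proof ratio_pos; lra.
  - exfalso; apply A_no_kAP, (near_attractor_progression x lam a0 a1 y0 y1); auto.
Qed.

Lemma not_near_attractor x lam : 0 < lam -> ~ near_attractor_kAP x lam.
Proof.
  intros Hl H; pose proof ratio_pos; pose proof ratio_le.
  (* each zoom multiplies the gap by [1/r], which the bound [lam <= 1/2] cannot survive *)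
  assert (Hzoom : forall n x lam, r ^ n / 2 < lam -> ~ near_attractor_kAP x lam).
  { induction n as [|n IHn]; intros x0 l0 Hl0 Hnear.
    - pose proof (near_attractor_gap_le x0 l0 ltac:(simpl in Hl0; lra) Hnear); simpl in Hl0; lra.
    - assert (0 < r ^ S n) by (apply pow_lt; lra).
      pose proof (near_attractor_gap_le x0 l0 ltac:(lra) Hnear).
      destruct (near_attractor_zoom x0 l0 ltac:(lra) Hnear) as [x' Hx'].
      apply (IHn x' (l0 / r)); auto.
      apply Rmult_lt_reg_l with r; auto; simpl in Hl0.
      replace (r * (l0 / r)) with l0 by (field; lra); lra. }
  destruct (pow_lt_1_zero r ltac:(rewrite Rabs_right; lra) (2 * lam) ltac:(lra)) as [n Hn].
  specialize (Hn n (le_n _)); rewrite Rabs_right in Hn by (apply Rle_ge, pow_le; lra).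
  apply (Hzoom n x lam); auto; lra.
Qed.

Lemma attractor_avoids_kAP : eps_avoids_kAP k (1 / (12 * INR N)) (attractor N A).
Proof.
  intros x lam Hl; apply NNPP; intros Hn; apply (not_near_attractor x lam Hl).
  intros i Hi; apply NNPP; intros Hi'; apply Hn; exists i; split; auto.
  intros e He; apply Rnot_lt_ge; intros Hlt; apply Hi'; exists e; auto.
Qed.

End Avoidance.

(** * Hausdorff dimension *)

Lemma ln_12N_pos : 0 < ln (12 * INR N).
Proof. pose proof (le_INR _ _ N_pos); simpl in *; rewrite <- ln_1; apply ln_increasing; lra. Qed.

(* This is where the similarity dimension comes from. *)
Lemma ratio_Rpower_dim n : (1 <= n)%nat ->
  Rpower r (ln (INR n) / ln (12 * INR N)) = / INR n.
Proof.
  intros Hn; pose proof ln_12N_pos; apply le_INR in Hn; simpl in Hn.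
  pose proof (le_INR _ _ N_pos); simpl in *.
  unfold Rpower, ratio, Rdiv; rewrite Rmult_1_l, ln_Rinv by lra.
  replace (ln (INR n) * / ln (12 * INR N) * - ln (12 * INR N)) with (- ln (INR n)) by (field; lra).
  rewrite exp_Ropp, exp_ln; lra.
Qed.

Lemma mass_ratio_lt_one n s : (1 <= n)%nat -> ln (INR n) / ln (12 * INR N) < s ->
  INR n * Rpower r s < 1.
Proof.
  intros Hn Hs; pose proof ratio_pos; pose proof ratio_le.
  assert (Hlt : Rpower r s < / INR n).
  { rewrite <- (ratio_Rpower_dim n Hn); unfold Rpower; apply exp_increasing.
    assert (ln r < 0) by (rewrite <- ln_1; apply ln_increasing; lra); nra. }
  apply le_INR in Hn; simpl in Hn.
  apply Rmult_lt_compat_l with (r := INR n) in Hlt; [|lra].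
  rewrite Rinv_r in Hlt; lra.
Qed.

Lemma fcomp_image_diam w :
  diam_le (fun x => exists y, 0 <= y <= 1 /\ x = fcomp N w y) (r ^ length w).
Proof.
  intros x y [u [Hu ->]] [v [Hv ->]]; rewrite (fcomp_affine w u), (fcomp_affine w v).
  replace (fcomp N w 0 + r ^ length w * u - (fcomp N w 0 + r ^ length w * v))
    with (r ^ length w * (u - v)) by ring.
  pose proof ratio_pos; assert (0 < r ^ length w) by (apply pow_lt; lra).
  rewrite Rabs_mult, Rabs_right by lra.
  assert (Rabs (u - v) <= 1) by (unfold Rabs; destruct Rcase_abs; lra); nra.
Qed.

Lemma attractor_null_above_dim s : A <> [] ->
  ln (INR (length A)) / ln (12 * INR N) < s -> hausdorff_measure_zero s (attractor N A).
Proof.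
  intros Hne HD delta Hdel; apply content_zero_of_finite_covers; intros eta Heta.
  assert (Hn : (1 <= length A)%nat) by (destruct A; [congruence|simpl; lia]).
  pose proof ratio_pos; pose proof ratio_le.
  set (q := INR (length A) * Rpower r s).
  assert (Hq : 0 <= q < 1).
  { split; [apply Rmult_le_pos; [apply pos_INR|left; apply exp_pos]|].
    apply mass_ratio_lt_one; auto. }
  destruct (pow_lt_1_zero r ltac:(rewrite Rabs_right; lra) delta Hdel) as [l1 Hl1].
  destruct (pow_lt_1_zero q ltac:(rewrite Rabs_right; lra) eta Heta) as [l2 Hl2].
  set (l := S (Nat.max l1 l2)).
  specialize (Hl1 l ltac:(lia)); specialize (Hl2 l ltac:(lia)).
  rewrite Rabs_right in Hl1, Hl2 by (apply Rle_ge, pow_le; lra).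
  exists (map (fun w x => exists y, 0 <= y <= 1 /\ x = fcomp N w y) (words A l)), (r ^ l).
  split; [|split; [|split]].
  - split; [apply pow_le; lra|apply Rlt_le, Hl1].
  - intros U HU; apply in_map_iff in HU as [w [<- Hw]]; apply in_words in Hw as [<- _].
    apply fcomp_image_diam.
  - intros x Hx; destruct (Hx l ltac:(lia)) as [w [Hlw [Hw Hxw]]].
    eexists; split; [apply in_map_iff; exists w; split; [reflexivity|apply in_words]|]; eauto.
  - rewrite length_map, length_words, pow_INR.
    unfold pw; destruct Rlt_dec as [_|Hnot]; [|exfalso; apply Hnot, pow_lt; lra].
    rewrite Rpower_pow_l, <- Rpow_mult_distr by lra; fold q; lra.
Qed.

Lemma level_set_compl_open l z : ~ level_set l z ->
  exists d, 0 < d /\ forall y, Rabs (y - z) < d -> ~ level_set l y.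
Proof.
  intros Hz.
  destruct (outside_intervals_open (words A l) (fun w => fcomp N w 0) (r ^ l) z)
    as [d [Hd Hy]].
  - intros w Hw Hc; apply Hz, level_set_iff; exists w; auto.
  - exists d; split; auto; intros y Hyz Hc.
    apply level_set_iff in Hc as [w [Hw Hc]]; apply (Hy y Hyz w Hw Hc).
Qed.

(* The level sets are compact and decrease to the attractor. *)
Lemma attractor_finite_subcover (a b : nat -> R) :
  (forall x, attractor N A x -> exists i, a i < x < b i) ->
  exists K, forall z, level_set (S K) z -> exists i, (i <= K)%nat /\ a i < z < b i.
Proof.
  intros Hcov.
  destruct (unit_interval_increasing_cover
    (fun M z => (exists i, (i <= M)%nat /\ a i < z < b i) \/ ~ level_set (S M) z))
    as [K HK].
  - intros M K z HMK [[i [Hi Hz]]|Hz]; [left; exists i; split; auto; lia|].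
    right; intros Hc; apply Hz, (level_set_anti (S M) (S K)); auto; lia.
  - intros M z [[i [Hi Hz]]|Hz].
    + exists (Rmin (z - a i) (b i - z)); split; [apply Rmin_pos; lra|].
      intros y Hy; left; exists i; split; auto.
      pose proof (Rmin_l (z - a i) (b i - z)); pose proof (Rmin_r (z - a i) (b i - z)).
      revert Hy; unfold Rabs; destruct Rcase_abs; intros; lra.
    + destruct (level_set_compl_open (S M) z Hz) as [d [Hd Hy]].
      exists d; split; auto; intros y Hy'; right; apply Hy, Hy'.
  - intros z _; destruct (classic (attractor N A z)) as [HE|HE].
    + destruct (Hcov z HE) as [i Hi]; exists i; left; exists i; auto.
    + apply not_all_ex_not in HE as [l Hl]; apply imply_to_and in Hl as [Hl1 Hl2].
      exists l; right; intros Hc; apply Hl2, (level_set_anti l (S l)); auto.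
  - exists K; intros z Hz; destruct (HK z (level_set_unit _ _ Hz)) as [Hi|Hn]; auto.
    contradiction.
Qed.

Section LowerBound.

Hypothesis A_nodup : NoDup A.
Hypothesis A_nonempty : A <> [].

Local Notation n := (length A).
Local Notation D := (ln (INR (length A)) / ln (12 * INR N)).

Lemma length_A_pos : (1 <= n)%nat.
Proof. destruct A; [congruence|simpl; lia]. Qed.

Lemma dim_lt_one : D < 1.
Proof.
  assert (HnN : (n <= N)%nat).
  { rewrite <- (length_seq N 1); apply NoDup_incl_length; auto.
    intros x Hx; apply in_seq; apply A_range in Hx; lia. }
  pose proof ln_12N_pos; pose proof length_A_pos as Hn.
  apply le_INR in HnN, Hn; pose proof (le_INR _ _ N_pos); simpl in *.
  apply Rmult_lt_reg_r with (ln (12 * INR N)); auto; unfold Rdiv.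
  rewrite Rmult_assoc, Rinv_l, Rmult_1_r, Rmult_1_l by lra.
  apply ln_increasing; lra.
Qed.

Lemma dim_nonneg : 0 <= D.
Proof.
  pose proof ln_12N_pos; pose proof length_A_pos as Hn; apply le_INR in Hn; simpl in Hn.
  apply Rmult_le_pos; [|left; apply Rinv_0_lt_compat; auto].
  destruct Hn as [Hn|<-]; [left; rewrite <- ln_1; apply ln_increasing|rewrite ln_1]; lra.
Qed.

(* Number of level-[m] left endpoints [fcomp w 0] whose image under [z |-> c + t z]
   lies in [(a, b)]; the affine parameters let the induction on [m] rescale the
   configuration instead of the interval. *)
Definition endpoint_count (m : nat) (c t a b : R) : nat :=
  list_sum (map (fun w => open_indicator a b (c + t * fcomp N w 0)) (words A m)).

Lemma endpoint_count_S m c t a b : endpoint_count (S m) c t a b =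
  list_sum (map (fun j => endpoint_count m (c + 6 * INR j * r * t) (t * r) a b) A).
Proof.
  unfold endpoint_count; simpl words; rewrite list_sum_map_flat_map.
  f_equal; apply map_ext; intros j; rewrite map_map; f_equal; apply map_ext; intros w.
  simpl fcomp; rewrite fmap_affine; f_equal; ring.
Qed.

Lemma endpoint_count_pos m c t a b : (0 < endpoint_count m c t a b)%nat ->
  exists z, 0 <= z <= 1 /\ a < c + t * z < b.
Proof.
  intros H; destruct (list_sum_map_pos _ _ H) as [w [Hw Hi]].
  apply in_words in Hw as [_ Hw]; exists (fcomp N w 0); split.
  - apply fcomp_in_unit; auto; lra.
  - apply open_indicator_pos, Hi.
Qed.

(* First-level pieces are [5r] apart, so a short interval meets only one of them. *)
Lemma endpoint_count_single_piece m q c t a b j j' : 0 < t -> b - a <= 5 * t * r ^ S q ->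
  (0 < endpoint_count m (c + 6 * INR j * r * t) (t * r) a b)%nat ->
  (0 < endpoint_count m (c + 6 * INR j' * r * t) (t * r) a b)%nat -> j = j'.
Proof.
  intros Ht Hab Hj Hj'; pose proof ratio_pos; pose proof ratio_le.
  destruct (endpoint_count_pos _ _ _ _ _ Hj) as [z [Hz Hjz]].
  destruct (endpoint_count_pos _ _ _ _ _ Hj') as [z' [Hz' Hjz']].
  assert (r ^ S q <= r) by (simpl; pose proof (pow_le_one r q ltac:(lra)); nra).
  assert (Htr : 0 < t * r) by (apply Rmult_lt_0_compat; lra).
  assert (0 <= t * r * z <= t * r) by (destruct Hz; split; nra).
  assert (0 <= t * r * z' <= t * r) by (destruct Hz'; split; nra).
  destruct (Nat.lt_trichotomy j j') as [Hl|[He|Hl]]; auto; exfalso;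
    apply le_INR in Hl; rewrite S_INR in Hl; nra.
Qed.

Lemma endpoint_count_le q : forall m c t a b, 0 < t -> (q <= m)%nat ->
  b - a <= 5 * t * r ^ q -> (endpoint_count m c t a b <= n ^ (m - q))%nat.
Proof.
  induction q as [|q IH]; intros m c t a b Ht Hqm Hab.
  - rewrite Nat.sub_0_r, <- length_words; apply list_sum_map_le_length.
    intros; apply open_indicator_le_one.
  - destruct m as [|m]; [lia|]; rewrite endpoint_count_S; simpl (S m - S q)%nat.
    pose proof ratio_pos; apply list_sum_map_single; auto.
    + intros j j' _ _; apply (endpoint_count_single_piece m q); auto.
    + intros j _; apply IH; [nra|lia|simpl in Hab; lra].
Qed.

Lemma cover_weight_ge_one K (a b : nat -> R) (q : nat -> nat) m :
  (forall i, (i <= K)%nat -> (q i <= m)%nat /\ b i - a i <= 5 * r ^ q i) ->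
  (forall w, In w (words A m) -> exists i, (i <= K)%nat /\ a i < fcomp N w 0 < b i) ->
  1 <= sum_f_R0 (fun i => (/ INR n) ^ q i) K.
Proof.
  intros Hq Hcov; pose proof length_A_pos as Hn; apply le_INR in Hn; simpl in Hn.
  assert (Hcount : INR n ^ m <= sum_f_R0 (fun i => INR n ^ (m - q i)) K).
  { rewrite <- pow_INR, <- length_words.
    eapply Rle_trans; [apply (length_le_sum_counts
      (fun i w => open_indicator (a i) (b i) (0 + 1 * fcomp N w 0)) _ K)|].
    - intros w Hw; destruct (Hcov w Hw) as [i [Hi Hab]]; exists i; split; auto.
      rewrite open_indicator_in; [lia|lra].
    - apply sum_Rle; intros i Hi; destruct (Hq i Hi) as [Hqm Hab].
      rewrite <- pow_INR; apply le_INR, (endpoint_count_le (q i)); auto; lra. }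
  assert (Hm : 0 < INR n ^ m) by (apply pow_lt; lra).
  apply Rmult_le_reg_l with (INR n ^ m); auto; rewrite Rmult_1_r.
  eapply Rle_trans; [exact Hcount|]; rewrite scal_sum; right; apply sum_eq; intros i Hi.
  destruct (Hq i Hi) as [Hqm _].
  replace m with ((m - q i) + q i)%nat at 2 by lia; rewrite pow_add.
  rewrite Rmult_comm, Rmult_assoc, <- Rpow_mult_distr, Rinv_r, pow1 by lra; ring.
Qed.

Lemma cover_weight_bound s q d rho : 0 < s <= D ->
  5 * r ^ S q < 2 * (d + rho) <= 1 -> 0 <= d -> 0 < rho ->
  (/ INR n) ^ q <= 4 * INR n * (pw d s + Rpower rho s).
Proof.
  intros Hs Hl Hd Hrho; pose proof ratio_pos; pose proof dim_lt_one.
  pose proof length_A_pos as Hn; apply le_INR in Hn; simpl in Hn.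
  assert (Hrq : 0 < r ^ S q) by (apply pow_lt; lra).
  assert (E : (/ INR n) ^ q = INR n * Rpower (r ^ S q) D).
  { rewrite Rpower_pow_l, ratio_Rpower_dim by (auto; apply length_A_pos); simpl; field; lra. }
  assert (Rpower (r ^ S q) D <= Rpower (2 * (d + rho)) s).
  { apply Rle_trans with (Rpower (2 * (d + rho)) D).
    - apply Rle_Rpower_l; lra.
    - apply Rpower_le_exponent_anti; lra. }
  pose proof (Rpower_interval_le d rho s Hd Hrho ltac:(lra)).
  rewrite E; nra.
Qed.

Lemma attractor_not_null_below_dim s : 0 < s < D -> ~ hausdorff_measure_zero s (attractor N A).
Proof.
  intros Hs Hnull; pose proof ratio_pos; pose proof ratio_le; pose proof dim_lt_one.
  pose proof length_A_pos as Hn; apply le_INR in Hn; simpl in Hn.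
  (* [eta] makes the total weight [4 n (sum d_i^s + sum rho_i^s) <= 8 n eta = 1/2]. *)
  set (eta := / (16 * INR n)).
  assert (Heta : 0 < eta) by (apply Rinv_0_lt_compat; lra).
  destruct (Hnull (1 / 8) ltac:(lra) eta Heta) as [U [d [Hcov [Hd Hsum]]]].
  destruct (choice (fun i rho => 0 < rho <= 1 / 8 /\ Rpower rho s <= eta * (1 / 2) ^ S i))
    as [rho Hrho].
  { intros i; apply small_radius; [lra|]; apply Rmult_lt_0_compat; auto; apply pow_lt; lra. }
  destruct (choice (fun i a => forall x, U i x -> a < x < a + 2 * (d i + rho i))) as [a Ha].
  { intros i; apply diam_le_open_interval; [apply Hd|apply Hrho]. }
  destruct (attractor_finite_subcover a (fun i => a i + 2 * (d i + rho i))) as [K HK].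
  { intros x Hx; destruct (Hcov x Hx) as [i Hi]; exists i; apply Ha, Hi. }
  assert (Hlen : forall i, 0 <= d i /\ 0 < rho i /\ 2 * (d i + rho i) <= 1 / 2).
  { intros i; destruct (Hd i) as [? _]; specialize (Hrho i); lra. }
  destruct (choice (fun i q => 5 * r ^ S q < 2 * (d i + rho i) <= 5 * r ^ q)) as [q Hq].
  { intros i; apply scale_exists; [lra|]; specialize (Hlen i); lra. }
  destruct (nat_fun_bound q K) as [m0 Hm0].
  assert (Hone : 1 <= sum_f_R0 (fun i => (/ INR n) ^ q i) K).
  { apply (cover_weight_ge_one K a (fun i => a i + 2 * (d i + rho i)) q (Nat.max m0 (S K))).
    - intros i Hi; split; [specialize (Hm0 i Hi); lia|]; specialize (Hq i); lra.
    - intros w Hw; apply in_words in Hw as [Hwl Hw]; apply HK.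
      apply level_set_fcomp; auto; [lia|lra]. }
  assert (Hweight : sum_f_R0 (fun i => (/ INR n) ^ q i) K <=
    4 * INR n * (sum_f_R0 (fun i => pw (d i) s) K + eta * sum_f_R0 (fun i => (1 / 2) ^ S i) K)).
  { rewrite (scal_sum _ _ eta), <- plus_sum, scal_sum; apply sum_Rle; intros i _.
    specialize (Hlen i); specialize (Hrho i).
    pose proof (cover_weight_bound s (q i) (d i) (rho i) ltac:(lra)
      ltac:(specialize (Hq i); lra) ltac:(lra) ltac:(lra)); nra. }
  specialize (Hsum K); pose proof (geom_half_sum K).
  assert (4 * INR n * eta = / 4) by (unfold eta; field; lra).
  assert (0 <= sum_f_R0 (fun i => (1 / 2) ^ S i) K)
    by (apply cond_pos_sum; intros; apply pow_le; lra).
  nra.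
Qed.

End LowerBound.

End SelfSimilarSet.

Theorem mainTheorem8 (k N : nat) (A : list nat) :
  (3 <= k)%nat -> (1 <= N)%nat ->
  A <> [] -> NoDup A -> (forall j, In j A -> (1 <= j <= N)%nat) ->
  ~ contains_nat_kAP k A ->
  hausdorff_dim_eq (attractor N A) (ln (INR (length A)) / ln (12 * INR N)) /\
  eps_avoids_kAP k (1 / (12 * INR N)) (attractor N A).
Proof.
  intros Hk HN Hne Hnd HA HAP; split.
  - apply hausdorff_dim_eq_of_bounds.
    + apply (dim_nonneg N A); auto.
    + intros s Hs; apply (attractor_not_null_below_dim N A); auto.
    + intros s Hs; apply (attractor_null_above_dim N A); auto.
  - apply (attractor_avoids_kAP N A HN HA k); auto; lia.
Qed.
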